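(* Let $n\ge 2$ and $d\ge 2$, and let $|\psi\rangle,|\varphi\rangle\in(\mathbb{C}^d)^{\otimes n}$ be permutation-symmetric states. Suppose there exist invertible $d\times d$ complex matrices $A_1,\ldots,A_n$ such that $$A_1\otimes A_2\otimes\cdots\otimes A_n|\psi\rangle=|\varphi\rangle.$$ Then there exists an invertible $d\times d$ matrix $A$ such that $$A\otimes A\otimes\cdots\otimes A\,|\psi\rangle=|\varphi\rangle$$ ($n$ factors). Moreover, if $A_1,\ldots,A_n$ are all unitary, then $A$ can be chosen unitary.
   Context: A state $|\psi\rangle\in(\mathbb{C}^d)^{\otimes n}$ is permutation-symmetric if $P_\sigma|\psi\rangle=|\psi\rangle$ for every permutation $\sigma$ of $\{1,\ldots,n\}$, where $P_\sigma|i_1 i_2\cdots i_n\rangle=|i_{\sigma(1)}i_{\sigma(2)}\cdots i_{\sigma(n)}\rangle$ on computational basis vectors. *)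

From mathcomp Require Import all_boot all_algebra all_fingroup.
From mathcomp Require Import complex Rstruct.
Set Implicit Arguments.
Unset Strict Implicit.
Unset Printing Implicit Defensive.
Import GRing.Theory Num.Theory.
Local Open Scope ring_scope.

Definition C : numClosedFieldType := (Rdefinitions.R)[i].

(* Computational basis labels of (C^d)^{⊗n}: maps 'I_n -> 'I_d,
   i.e. the multi-index (i_1,...,i_n). *)
Definition basis_idx (n d : nat) := {ffun 'I_n -> 'I_d}.

(* A vector of (C^d)^{⊗n}, given by its coordinates in the computational basis. *)
Definition tensor (n d : nat) := {ffun basis_idx n d -> C}.

(* Permutation operator P_sigma : |i_1..i_n> |-> |i_sigma(1) .. i_sigma(n)>.
   Its action on coordinates: (P_sigma psi)(j) = psi(j o sigma^-1). *)
Definition perm_op (n d : nat) (s : 'S_n) (psi : tensor n d) : tensor n d :=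
  [ffun j : basis_idx n d => psi [ffun k => j ((s^-1)%g k)]].

Definition perm_symmetric (n d : nat) (psi : tensor n d) : Prop :=
  forall s : 'S_n, perm_op s psi = psi.

Definition is_state (n d : nat) (psi : tensor n d) : Prop :=
  \sum_(i : basis_idx n d) `|psi i| ^+ 2 = 1.

Definition tensor_op (n d : nat) (As : 'I_n -> 'M[C]_d) (psi : tensor n d)
  : tensor n d :=
  [ffun i : basis_idx n d =>
     \sum_(j : basis_idx n d) (\prod_(k < n) As k (i k) (j k)) * psi j].

Definition unitary (d : nat) (A : 'M[C]_d) : Prop :=
  A *m (map_mx Num.conj A)^T = 1%:M.

(* Write A_l = A_0 M_l.  Symmetry of psi and of phi = (A_l)_l psi under the
   transposition (0 l) shows that M_l applied at site l of psi has the same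
   effect as at site 0, so all the M_l can be gathered at site 0:
   phi = A_0^(x n) (Y at site 0) psi with Y = M_0 ... M_(n-1).  Since
   A_0^(-1)^(x n) phi is again symmetric, Y acts on psi in the same way at every
   site, and hence so does every polynomial in Y.  The invertible matrix Y has
   an n-th root Z that is a polynomial in Y (lift a root of X modulo the
   characteristic polynomial of Y factor by factor), and distributing
   Z^n = Y over the n sites gives Z^(x n) psi = (Y at site 0) psi, so A = A_0 Z
   works.  If Y is unitary, the spectral theorem shows that Z is unitary too. *)

From mathcomp Require Import all_boot all_algebra all_fingroup.
From mathcomp Require Import complex Rstruct ring spectral.
Import GRing.Theory Num.Theory.
Local Open Scope ring_scope.
Set Implicit Arguments.
Unset Strict Implicit.

Section MatrixRoots.
Variable F : numClosedFieldType.
Implicit Types (q z : {poly F}) (l : F).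

(* Look for the root in the form z + c q: if z^(k+1) - X = e q, then
   (z + c q)^(k+1) - X = q (e + c T), and c is chosen to make the cofactor
   vanish at l.  If q(l) = 0 this is a
   linear equation in c with slope (k+1) z(l)^k != 0; otherwise take c with
   z(l) + c q(l) a (k+1)-th root of l. *)
Lemma Xroot_modp_lift k q z l : q %| z ^+ k.+1 - 'X -> l != 0 ->
  exists z', q * ('X - l%:P) %| z' ^+ k.+1 - 'X.
Proof.
move=> /dvdpP[e he] l_neq0.
pose T c := \sum_(i < k.+1) (z + c%:P * q) ^+ (k - i) * z ^+ i.
have shiftE c : (z + c%:P * q) ^+ k.+1 - 'X = q * (e + c%:P * T c).
  have := subrXX (z + c%:P * q) z k.+1; rewrite addrAC subrr add0r => XXE.
  by rewrite -(subrK (z ^+ k.+1) (_ ^+ _)) XXE -addrA he /T /=; ring.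
suff [c rootc] : exists c, root (e + c%:P * T c) l.
  by exists (z + c%:P * q); rewrite shiftE dvdp_mul // dvdp_XsubCl.
have zlE : z.[l] ^+ k.+1 = l + e.[l] * q.[l].
  by have := congr1 (horner^~ l) he; rewrite !hornerE => <-; rewrite addrC subrK.
have [ql0 | qlN0] := eqVneq q.[l] 0.
  have zlN0 : z.[l] != 0.
    by apply: contra_neq l_neq0 => zl0; move: zlE; rewrite zl0 ql0 expr0n mulr0 addr0.
  have Tl c : (T c).[l] = k.+1%:R * z.[l] ^+ k.
    rewrite horner_sum (eq_bigr (fun _ => z.[l] ^+ k)) => [|i _].
      by rewrite sumr_const card_ord mulr_natl.
    by rewrite !hornerE ql0 mulr0 addr0 -exprD subnK // -ltnS.
  exists (- e.[l] / (k.+1%:R * z.[l] ^+ k)).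
  rewrite /root !hornerE Tl divfK ?subrr //.
  by rewrite mulf_neq0 ?expf_neq0 ?pnatr_eq0.
pose c := (k.+1.-root l - z.[l]) / q.[l].
have zcl : z.[l] + c * q.[l] = k.+1.-root l by rewrite divfK // addrC subrK.
exists c; rewrite /root; have := congr1 (horner^~ l) (shiftE c).
rewrite !hornerE zcl rootCK // subrr => /esym/eqP.
by rewrite mulf_eq0 (negbTE qlN0).
Qed.

Lemma Xroot_modp k q : ~~ root q 0 -> exists z, q %| z ^+ k.+1 - 'X.
Proof.
move=> q0N0; have [rs qE] := closed_field_poly_normal q.
have : lead_coef q != 0.
  by rewrite lead_coef_eq0; apply: contraNneq q0N0 => ->; rewrite root0.
move: (lead_coef q) qE => c qE cN0; rewrite {q}qE rootZ // in q0N0 *.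
rewrite (root_prod_XsubC rs 0) in q0N0.
suff [z dvd_z] : exists z, \prod_(r <- rs) ('X - r%:P) %| z ^+ k.+1 - 'X.
  by exists z; rewrite dvdpZl.
elim: rs q0N0 => [|r rs IH]; first by exists 0; rewrite big_nil dvd1p.
rewrite inE negb_or eq_sym => /andP[r_neq0 /IH[z dvd_z]].
by rewrite big_cons mulrC; apply: Xroot_modp_lift dvd_z r_neq0.
Qed.

Lemma unitmx_horner_root d k (Y : 'M[F]_d.+1) : Y \in unitmx ->
  exists p : {poly F}, horner_mx Y p ^+ k.+1 = Y.
Proof.
move=> Yunit; have [p dvd_p] : exists p, char_poly Y %| p ^+ k.+1 - 'X.
  apply: Xroot_modp; rewrite /root horner_coef0 char_poly_det mulf_eq0 negb_or.
  by rewrite signr_eq0 -unitfE -unitmxE.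
exists p; apply/eqP; rewrite -subr_eq0 -{2}(horner_mx_X Y) -rmorphXn -rmorphB /=.
by have [r ->] := dvdpP _ _ dvd_p; rewrite rmorphM /= Cayley_Hamilton mulr0.
Qed.

Lemma diag_unitarymxP d (D : 'rV[F]_d) :
  reflect (forall i, `|D 0 i| = 1) (diag_mx D \is unitarymx).
Proof.
apply: (iffP unitarymxP); rewrite tr_diag_mx map_diag_mx mulmx_diag.
  move=> /matrixP DE i; have /eqP := DE i i; rewrite !mxE eqxx mulr1n -normCK.
  by rewrite pexpr_eq1 ?normr_ge0 // => /eqP.
by move=> D1; apply/matrixP => i j; rewrite !mxE -normCK D1 expr1n.
Qed.

Lemma unitarymx_horner_root d k (Y : 'M[F]_d.+1) (p : {poly F}) :
  Y \is unitarymx -> horner_mx Y p ^+ k.+1 = Y -> horner_mx Y p \is unitarymx.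
Proof.
move=> UY rootY; have Ynormal : Y \is normalmx.
  by apply/normalmxP; rewrite (unitarymxP UY) -invmx_unitary // mulVmx ?unitarymx_unit.
have /orthomx_spectralP YE := Ynormal.
set P := spectralmx Y in YE; set D := spectral_diag Y in YE.
have [UP Punit] : P \is unitarymx /\ P \in unitmx.
  by split; [apply: spectral_unitarymx | apply: spectral_unit].
have UPV : invmx P \is unitarymx by rewrite invmx_unitary // trmxC_unitary.
have conjE q : horner_mx Y q = invmx P *m diag_mx (map_mx (horner q) D) *m P.
  by rewrite [in LHS]YE horner_mx_uconjC ?horner_mx_diag.
have UD : diag_mx D \is unitarymx.
  have -> : diag_mx D = P *m Y *m invmx P by rewrite YE !mulmxA mulmxV // mul1mx mulmxK.
  by rewrite !mul_unitarymx.
have rootD i : (p.[D 0 i]) ^+ k.+1 = D 0 i.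
  have := congr1 (fun M => P *m M *m invmx P) rootY.
  rewrite -rmorphXn /= [in X in X -> _]conjE [in X in X -> _]YE.
  rewrite !mulmxA mulmxV // mul1mx mulmxK // mul1mx mulmxK //.
  by move/matrixP/(_ i i); rewrite !mxE eqxx !mulr1n horner_exp.
rewrite conjE !mul_unitarymx //; apply/diag_unitarymxP => i; rewrite mxE.
move/diag_unitarymxP/(_ i): UD; rewrite -{1}(rootD i) normrX => /eqP.
by rewrite pexpr_eq1 ?normr_ge0 // => /eqP.
Qed.

End MatrixRoots.

Definition slot (R : pzSemiRingType) n d (i : 'I_n) (M : 'M[R]_d) (l : 'I_n) :=
  if l == i then M else 1%:M.
Arguments slot {R n d}.

Lemma slot_perm (R : pzSemiRingType) n d (s : 'S_n) i (M : 'M[R]_d) l :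
  slot i M (s l) = slot ((s^-1)%g i) M l.
Proof. by rewrite /slot (canF_eq (permK s)). Qed.

Section TensorOp.
Variables n d : nat.
Implicit Types (psi : tensor n d) (As Bs : 'I_n -> 'M[C]_d) (A M N : 'M[C]_d).

Lemma eq_tensor_op As Bs psi : As =1 Bs -> tensor_op As psi = tensor_op Bs psi.
Proof.
move=> AB; apply/ffunP=> x; rewrite !ffunE; apply: eq_bigr => y _.
by congr (_ * _); apply: eq_bigr => l _; rewrite AB.
Qed.

Lemma tensor_op1 psi : tensor_op (fun _ => 1%:M) psi = psi.
Proof.
apply/ffunP=> x; rewrite ffunE (bigD1 x) //= [X in _ + X]big1 => [|y yNx].
  by rewrite big1 ?mul1r ?addr0 // => l _; rewrite mxE eqxx.
have [l xyl] : exists l, x l != y l.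
  apply/existsP; apply: contraR yNx; rewrite negb_exists => /forallP xy.
  by apply/eqP/ffunP => l; move: (xy l); rewrite negbK => /eqP.
by rewrite (bigD1 l) //= mxE (negbTE xyl) !mul0r.
Qed.

Lemma tensor_opM As Bs psi :
  tensor_op As (tensor_op Bs psi) = tensor_op (fun l => As l *m Bs l) psi.
Proof.
apply/ffunP=> x; rewrite !ffunE.
under eq_bigr do rewrite ffunE big_distrr.
rewrite exchange_big; apply: eq_bigr => z _ /=.
under eq_bigr do rewrite mulrA.
rewrite -big_distrl /=; congr (_ * _).
under [RHS]eq_bigr do rewrite mxE.
by rewrite bigA_distr_bigA /=; apply: eq_bigr => f _; rewrite -big_split.
Qed.

Lemma tensor_opC As Bs psi : (forall l, As l *m Bs l = Bs l *m As l) ->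
  tensor_op As (tensor_op Bs psi) = tensor_op Bs (tensor_op As psi).
Proof. by move=> AB; rewrite !tensor_opM; apply: eq_tensor_op. Qed.

Lemma perm_op_tensor_op (s : 'S_n) As psi :
  perm_op s (tensor_op As psi) = tensor_op (fun l => As (s l)) (perm_op s psi).
Proof.
apply/ffunP=> x; rewrite !ffunE.
rewrite (reindex (fun y : basis_idx n d => [ffun l => y ((s^-1)%g l)])) /=; last first.
  exists (fun y : basis_idx n d => [ffun l => y (s l)]) => y _;
  by apply/ffunP => l; rewrite !ffunE ?permK ?permKV.
apply: eq_bigr => y _; rewrite !ffunE; congr (_ * _).
by rewrite (reindex_inj (@perm_inj _ s)); apply: eq_bigr => l _; rewrite !ffunE permK.
Qed.

Lemma tensor_op_perm (s : 'S_n) As psi :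
  perm_symmetric psi -> perm_symmetric (tensor_op As psi) ->
  tensor_op (fun l => As (s l)) psi = tensor_op As psi.
Proof. by move=> sym_psi sym_Apsi; rewrite -{1}(sym_psi s) -perm_op_tensor_op. Qed.

Lemma perm_symmetric_tensor_op A psi :
  perm_symmetric psi -> perm_symmetric (tensor_op (fun _ => A) psi).
Proof. by move=> sym_psi s; rewrite perm_op_tensor_op sym_psi. Qed.

Lemma tensor_op_slot1 i psi : tensor_op (slot i 1%:M) psi = psi.
Proof. by rewrite -[RHS]tensor_op1; apply: eq_tensor_op => l; rewrite /slot if_same. Qed.

Lemma tensor_op_slotM i M N psi :
  tensor_op (slot i M) (tensor_op (slot i N) psi) = tensor_op (slot i (M *m N)) psi.
Proof.
by rewrite tensor_opM; apply: eq_tensor_op => l; rewrite /slot; case: ifP; rewrite ?mul1mx.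
Qed.

Lemma tensor_op_slotC i j M N psi : i != j ->
  tensor_op (slot i M) (tensor_op (slot j N) psi) =
  tensor_op (slot j N) (tensor_op (slot i M) psi).
Proof.
move=> ij; apply: tensor_opC => l; rewrite /slot.
by case: (l =P i) => [->|_]; rewrite ?(negbTE ij) ?mulmx1 ?mul1mx.
Qed.

Lemma prod_slot i M (x y : basis_idx n d) :
  \prod_l slot i M l (x l) (y l) =
  M (x i) (y i) * \prod_(l | l != i) (1%:M : 'M[C]_d) (x l) (y l).
Proof.
by rewrite (bigD1 i) //= /slot eqxx; congr (_ * _); apply: eq_bigr => l /negbTE->.
Qed.

Lemma tensor_op_slot_linear i a M N psi :
  tensor_op (slot i (a *: M + N)) psi =
  a *: tensor_op (slot i M) psi + tensor_op (slot i N) psi.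
Proof.
apply/ffunP=> x; rewrite !ffunE scaler_sumr -big_split /=; apply: eq_bigr => y _.
by rewrite !prod_slot !mxE -[a *: _]/(a * _); ring.
Qed.

Definition site_independent psi M :=
  forall i j, tensor_op (slot i M) psi = tensor_op (slot j M) psi.

Lemma site_independent1 psi : site_independent psi 1%:M.
Proof. by move=> i j; rewrite !tensor_op_slot1. Qed.

Lemma site_independent_linear psi a M N :
  site_independent psi M -> site_independent psi N ->
  site_independent psi (a *: M + N).
Proof. by move=> siM siN i j; rewrite !tensor_op_slot_linear (siM i j) (siN i j). Qed.

Lemma site_independentM psi M N : M *m N = N *m M ->
  site_independent psi M -> site_independent psi N ->
  site_independent psi (M *m N).
Proof.
move=> MN siM siN i j; have [<-//|ij] := eqVneq i j.
rewrite -!tensor_op_slotM (siN i j) tensor_op_slotC // (siM i j).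
by rewrite tensor_op_slotM -MN -tensor_op_slotM.
Qed.

Lemma site_independent_sym psi i M :
  perm_symmetric psi -> perm_symmetric (tensor_op (slot i M) psi) ->
  site_independent psi M.
Proof.
suff slotE j : perm_symmetric psi -> perm_symmetric (tensor_op (slot i M) psi) ->
    tensor_op (slot j M) psi = tensor_op (slot i M) psi.
  by move=> sym_psi sym_Mpsi j k; rewrite !slotE.
move=> sym_psi sym_Mpsi; rewrite -[RHS](tensor_op_perm (tperm i j)) //.
by apply: eq_tensor_op => l; rewrite slot_perm tpermV tpermL.
Qed.

Lemma tensor_op_slot_transfer As psi i j :
  (forall l, As l \in unitmx) ->
  tensor_op (fun l => As (tperm i j l)) psi = tensor_op As psi ->
  tensor_op (slot i (invmx (As j) *m As i)) psi =
  tensor_op (slot j (invmx (As j) *m As i)) psi.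
Proof.
move=> As_unit swapE; have [<-//|ij] := eqVneq i j.
have fixE : tensor_op (fun l => invmx (As l) *m As (tperm i j l)) psi = psi.
  rewrite -tensor_opM swapE tensor_opM -[RHS]tensor_op1.
  by apply: eq_tensor_op => l; rewrite mulVmx.
rewrite -{1}fixE tensor_opM; apply: eq_tensor_op => l; rewrite /slot.
have [->|li] := eqVneq l i; first by rewrite (negbTE ij) tpermL mulmxA mulmxK // mulVmx.
have [->|lj] := eqVneq l j; first by rewrite tpermR mul1mx.
by rewrite tpermD 1?eq_sym // mul1mx mulVmx.
Qed.

End TensorOp.

Lemma site_independent_horner n d (psi : tensor n d.+1) (Y : 'M[C]_d.+1) p :
  site_independent psi Y -> site_independent psi (horner_mx Y p).
Proof.
move=> siY; elim/poly_ind: p => [|p c sip].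
  have := site_independent_linear (-1) (site_independent1 psi) (site_independent1 psi).
  by rewrite scaleN1r addNr rmorph0.
rewrite rmorphD rmorphM /= horner_mx_X horner_mx_C addrC -scalemx1.
apply: site_independent_linear; first exact: site_independent1.
by apply: site_independentM => //; rewrite mulmxE; apply/esym/comm_mx_horner.
Qed.

Lemma tensor_op_gather n d (psi : tensor n d.+1) (i0 : 'I_n) (Ms : 'I_n -> 'M[C]_d.+1) :
  (forall i, tensor_op (slot i (Ms i)) psi = tensor_op (slot i0 (Ms i)) psi) ->
  (forall i, Ms i0 *m Ms i = Ms i *m Ms i0) ->
  tensor_op Ms psi = tensor_op (slot i0 (\prod_i Ms i)) psi.
Proof.
move=> moveE commE; pose restr (s : seq 'I_n) l := if l \in s then Ms l else 1%:M.
suff restrE s : uniq s ->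
    tensor_op (restr s) psi = tensor_op (slot i0 (\prod_(i <- s) Ms i)) psi.
  rewrite -restrE ?index_enum_uniq //.
  by apply: eq_tensor_op => l; rewrite /restr mem_index_enum.
elim: s => [|i s IH] /=; first by rewrite big_nil tensor_op_slot1 -[RHS]tensor_op1.
move=> /andP[iNs s_uniq].
have splitE : tensor_op (restr (i :: s)) psi =
    tensor_op (restr s) (tensor_op (slot i (Ms i)) psi).
  rewrite tensor_opM; apply: eq_tensor_op => l; rewrite /restr /slot inE.
  by case: eqP => [->|_]; rewrite ?(negbTE iNs) ?mulmx1 ?mul1mx.
rewrite splitE moveE tensor_opC => [|l]; last first.
  rewrite /restr /slot; case: eqP => [->|_]; last by rewrite mulmx1 mul1mx.
  by case: ifP; rewrite ?commE ?mulmx1 ?mul1mx.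
by rewrite IH // tensor_op_slotM big_cons mulmxE.
Qed.

Lemma tensor_op_const n d (psi : tensor n d.+1) (i0 : 'I_n) (Z : 'M[C]_d.+1) :
  site_independent psi Z ->
  tensor_op (fun _ => Z) psi = tensor_op (slot i0 (Z ^+ n)) psi.
Proof.
move=> siZ; rewrite (tensor_op_gather (i0 := i0) (Ms := fun _ => Z)) //.
by rewrite prodr_const card_ord.
Qed.

Lemma unitaryP d (A : 'M[C]_d) : unitary A <-> A \is unitarymx.
Proof. by rewrite /unitary map_trmx; split => [|/unitarymxP//]; move/unitarymxP. Qed.

Section UniformLocalOperator.
Variables (n d : nat) (psi : tensor n.+1 d.+1) (As : 'I_n.+1 -> 'M[C]_d.+1).
Hypotheses (sym_psi : perm_symmetric psi) (sym_Apsi : perm_symmetric (tensor_op As psi)).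
Hypothesis As_unit : forall l, As l \in unitmx.

Let Ms l := invmx (As ord0) *m As l.
Let Y := \prod_l Ms l.

Lemma tensor_op_factor :
  tensor_op As psi = tensor_op (fun _ => As ord0) (tensor_op (slot ord0 Y) psi).
Proof.
have Ms0 : Ms ord0 = 1%:M by rewrite /Ms mulVmx.
rewrite -tensor_op_gather => [|l|l]; last by rewrite Ms0 mul1mx mulmx1.
  by rewrite tensor_opM; apply: eq_tensor_op => l; rewrite /Ms mulmxA mulmxV ?mul1mx.
exact/tensor_op_slot_transfer/tensor_op_perm.
Qed.

Lemma site_independent_prod : site_independent psi Y.
Proof.
apply: (site_independent_sym (i := ord0)) => //.
have -> : tensor_op (slot ord0 Y) psi =
    tensor_op (fun _ => invmx (As ord0)) (tensor_op As psi).
  rewrite tensor_op_factor tensor_opM -[LHS]tensor_op1.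
  by apply: eq_tensor_op => l; rewrite mulVmx.
exact: perm_symmetric_tensor_op.
Qed.

Lemma uniform_local_operator : exists A, [/\ A \in unitmx,
  (forall l, As l \is unitarymx) -> A \is unitarymx &
  tensor_op (fun _ => A) psi = tensor_op As psi].
Proof.
have Y_unit : Y \in unitmx.
  by apply: unitr_prod => l _; rewrite unitmx_mul unitmx_inv !As_unit.
have [p rootY] := unitmx_horner_root n Y_unit; set Z := horner_mx Y p in rootY.
have Z_unit : Z \is a GRing.unit by rewrite -(unitrX_pos _ (ltn0Sn n)) rootY.
exists (As ord0 *m Z); split.
- by rewrite unitmx_mul As_unit.
- move=> As_unitary; apply: mul_unitarymx; first exact: As_unitary.
  apply: (unitarymx_horner_root _ rootY).
  apply: (big_ind (fun M => M \is unitarymx)) => [|M N|l _].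
  + by apply/unitarymxP; rewrite trmx1 map_mx1 mulmx1.
  + exact: mul_unitarymx.
  + by apply: mul_unitarymx => //; rewrite invmx_unitary // trmxC_unitary.
rewrite tensor_op_factor -rootY -(tensor_op_const ord0) ?tensor_opM //.
exact/site_independent_horner/site_independent_prod.
Qed.

End UniformLocalOperator.

Theorem theorem1 (n d : nat) (hn : (2 <= n)%N) (hd : (2 <= d)%N)
  (psi phi : tensor n d)
  (hpsi : is_state psi) (hphi : is_state phi)
  (spsi : perm_symmetric psi) (sphi : perm_symmetric phi)
  (As : 'I_n -> 'M[C]_d)
  (hinv : forall k, As k \in unitmx)
  (hA : tensor_op As psi = phi) :
  (exists A : 'M[C]_d, A \in unitmx /\ tensor_op (fun _ => A) psi = phi) /\
  ((forall k, unitary (As k)) ->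
     exists A : 'M[C]_d, unitary A /\ tensor_op (fun _ => A) psi = phi).
Proof.
case: n hn psi phi hpsi hphi spsi sphi As hinv hA => [//|n] _.
case: d hd => [//|d] _ psi phi _ _ spsi sphi As hinv hA.
rewrite -{}hA in sphi *.
have [A [A_unit A_unitary <-]] := uniform_local_operator spsi sphi hinv.
split; first by exists A.
by move=> As_unitary; exists A; split => //; apply/unitaryP/A_unitary => l; apply/unitaryP.
Qed.
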